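(* The class $\mathcal U_{\mathrm{fin}}$ of all finite two-sorted ultrametric spaces, with dc-embeddings as morphisms, is a Fraïssé class: it is nonempty, has only countably many dc-isomorphism types, and has the joint embedding property and the amalgamation property. Its Fraïssé limit $\mathbb U$ is dc-isomorphic to $\mathbb U_{\mathbb Q}$, the countable rational Urysohn ultrametric space viewed as a two-sorted space with distance set $\mathbb Q_{\ge 0}$. In particular, $\mathbb U$ is both dc-homogeneous and iso-homogeneous.
   Context: A two-sorted ultrametric space is a triple $(X,d_X,D_X)$ where $D_X$ is a linearly ordered set with least element $0$ (the distance set), $X$ is a set of points, and $d_X\colon X\times X\to D_X$ satisfies $d_X(x,y)=d_X(y,x)$, $d_X(x,y)=0\iff x=y$, and $d_X(x,z)\le \max\{d_X(x,y),d_X(y,z)\}$. It is finite (resp. countable) if both $X$ and $D_X$ are finite (resp. countable). A dc-embedding $f\colon (X,d_X,D_X)\to (Y,d_Y,D_Y)$ is an injective map $f\colon X\to Y$ together with an order embedding $D_f\colon D_X\to D_Y$ with $D_f(0)=0$ such that $d_Y(f(x),f(x'))=D_f(d_X(x,x'))$ for all $x,x'\in X$. A dc-isomorphism is a dc-embedding that is bijective in both sorts. It is an isometric embedding if $D_X\subseteq D_Y$ and $D_f$ is the inclusion; an isometry is a dc-isomorphism with $D_X=D_Y$ and $D_f$ the identity. $A$ is a substructure of $X$ if $A\subseteq X$, $D_A\subseteq D_X$ and the inclusion is a dc-embedding. Joint embedding property: any two objects dc-embed into a common one. Amalgamation property: for all dc-embeddings $\alpha_1\colon A\to B$, $\alpha_2\colon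 A\to C$ of finite spaces there are a finite $D$ and dc-embeddings $\beta_1\colon B\to D$, $\beta_2\colon C\to D$ with $\beta_1\circ\alpha_1=\beta_2\circ\alpha_2$. The Fraïssé limit of the class is the (unique up to dc-isomorphism) countable two-sorted ultrametric space that is the union of an increasing chain of finite substructures, into which every finite space dc-embeds, and in which every dc-isomorphism between finite substructures extends to a dc-automorphism. A space $X$ is dc-homogeneous if every dc-isomorphism between finite substructures of $X$ extends to a dc-automorphism of $X$; it is iso-homogeneous if every isometry between finite substructures of $X$ extends to an isometry of $X$. $\mathbb U_{\mathbb Q}$ is the unique (up to isometry) countable ultrametric space with all distances in $\mathbb Q_{\ge0}$ into which every finite ultrametric space with rational distances embeds isometrically and in which every isometry between finite subsets extends to an isometry of the whole space. *)

From mathcomp Require Import all_boot all_order all_algebra.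
From Stdlib Require List.
Import Order.TTheory GRing.Theory Num.Theory.

Record tsu := TSU {
  pts : Type;
  dst : Type;
  dle : dst -> dst -> Prop;
  dzero : dst;
  dist : pts -> pts -> dst;
  dle_refl : forall a, dle a a;
  dle_antisym : forall a b, dle a b -> dle b a -> a = b;
  dle_trans : forall a b c, dle a b -> dle b c -> dle a c;
  dle_total : forall a b, dle a b \/ dle b a;
  dzero_least : forall a, dle dzero a;
  dist_sym : forall x y, dist x y = dist y x;
  dist_zero : forall x y, dist x y = dzero <-> x = y;
  dist_ultra : forall x y z,
      dle (dist x z) (dist x y) \/ dle (dist x z) (dist y z)
}.

Definition fin_type (T : Type) : Prop := exists l : list T, forall x, List.In x l.
Definition count_type (T : Type) : Prop :=
  exists f : T -> nat, forall x y, f x = f y -> x = y.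
Definition fin_pred {T : Type} (P : T -> Prop) : Prop :=
  exists l : list T, forall x, P x -> List.In x l.

Definition finite_tsu (X : tsu) : Prop := fin_type (pts X) /\ fin_type (dst X).
Definition countable_tsu (X : tsu) : Prop :=
  count_type (pts X) /\ count_type (dst X).

Definition order_emb (X Y : tsu) (g : dst X -> dst Y) : Prop :=
  forall a b, dle X a b <-> dle Y (g a) (g b).

Definition dc_emb (X Y : tsu) (f : pts X -> pts Y) (g : dst X -> dst Y) : Prop :=
  (forall x x', f x = f x' -> x = x') /\ order_emb X Y g /\
  g (dzero X) = dzero Y /\
  (forall x x', dist Y (f x) (f x') = g (dist X x x')).

Definition dc_iso (X Y : tsu) (f : pts X -> pts Y) (g : dst X -> dst Y) : Prop :=
  dc_emb X Y f g /\ bijective f /\ bijective g.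

Definition dc_embeds (X Y : tsu) : Prop := exists f g, dc_emb X Y f g.
Definition dc_isomorphic (X Y : tsu) : Prop := exists f g, dc_iso X Y f g.

Definition JEP_fin : Prop :=
  forall A B : tsu, finite_tsu A -> finite_tsu B ->
    exists C : tsu, finite_tsu C /\ dc_embeds A C /\ dc_embeds B C.

Definition AP_fin : Prop :=
  forall (A B C : tsu), finite_tsu A -> finite_tsu B -> finite_tsu C ->
  forall (a1 : pts A -> pts B) (g1 : dst A -> dst B)
         (a2 : pts A -> pts C) (g2 : dst A -> dst C),
    dc_emb A B a1 g1 -> dc_emb A C a2 g2 ->
    exists (D : tsu) (b1 : pts B -> pts D) (h1 : dst B -> dst D)
           (b2 : pts C -> pts D) (h2 : dst C -> dst D),
      finite_tsu D /\ dc_emb B D b1 h1 /\ dc_emb C D b2 h2 /\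
      (forall x, b1 (a1 x) = b2 (a2 x)) /\ (forall d, h1 (g1 d) = h2 (g2 d)).

Definition substr (X : tsu) (P : pts X -> Prop) (E : dst X -> Prop) : Prop :=
  E (dzero X) /\ (forall x y, P x -> P y -> E (dist X x y)).

Definition fin_substr (X : tsu) (P : pts X -> Prop) (E : dst X -> Prop) : Prop :=
  substr X P E /\ fin_pred P /\ fin_pred E.

Definition sub_dc_iso (X : tsu) (P : pts X -> Prop) (E : dst X -> Prop)
    (Q : pts X -> Prop) (F : dst X -> Prop)
    (f : pts X -> pts X) (g : dst X -> dst X) : Prop :=
  (forall x, P x -> Q (f x)) /\
  (forall x x', P x -> P x' -> f x = f x' -> x = x') /\
  (forall y, Q y -> exists x, P x /\ f x = y) /\
  (forall a, E a -> F (g a)) /\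
  (forall b, F b -> exists a, E a /\ g a = b) /\
  (forall a b, E a -> E b -> (dle X a b <-> dle X (g a) (g b))) /\
  g (dzero X) = dzero X /\
  (forall x x', P x -> P x' -> dist X (f x) (f x') = g (dist X x x')).

Definition dc_homogeneous (X : tsu) : Prop :=
  forall P E Q F f g,
    fin_substr X P E -> fin_substr X Q F -> sub_dc_iso X P E Q F f g ->
    exists phi psi, dc_iso X X phi psi /\
      (forall x, P x -> phi x = f x) /\ (forall a, E a -> psi a = g a).

(* isometries: same distance set, identity on distances *)
Definition iso_homogeneous (X : tsu) : Prop :=
  forall P Q E f,
    fin_substr X P E -> fin_substr X Q E ->
    sub_dc_iso X P E Q E f (fun a => a) ->
    exists phi, dc_iso X X phi (fun a => a) /\ (forall x, P x -> phi x = f x).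

Definition is_fraisse_limit (U : tsu) : Prop :=
  countable_tsu U /\
  (exists (A : nat -> pts U -> Prop) (E : nat -> dst U -> Prop),
     (forall n, fin_substr U (A n) (E n)) /\
     (forall n x, A n x -> A n.+1 x) /\ (forall n a, E n a -> E n.+1 a) /\
     (forall x, exists n, A n x) /\ (forall a, exists n, E n a)) /\
  (forall B : tsu, finite_tsu B -> dc_embeds B U) /\
  dc_homogeneous U.

Local Open Scope ring_scope.

Record rum_axioms (Y : Type) (d : Y -> Y -> rat) : Prop := {
  rum_ge0 : forall x y, 0 <= d x y;
  rum_sym : forall x y, d x y = d y x;
  rum_zero : forall x y, d x y = 0 <-> x = y;
  rum_ultra : forall x y z, d x z <= Num.max (d x y) (d y z)
}.
Arguments rum_axioms {Y} d.
Arguments rum_ge0 {Y d}.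
Arguments rum_sym {Y d}.
Arguments rum_zero {Y d}.
Arguments rum_ultra {Y d}.

Definition is_UQ (Y : Type) (d : Y -> Y -> rat) : Prop :=
  rum_axioms d /\ count_type Y /\
  (forall (Z : Type) (dZ : Z -> Z -> rat), fin_type Z -> rum_axioms dZ ->
     exists f : Z -> Y, forall z z', d (f z) (f z') = dZ z z') /\
  (forall (P Q : Y -> Prop) (f : Y -> Y), fin_pred P -> fin_pred Q ->
     (forall x, P x -> Q (f x)) ->
     (forall x x', P x -> P x' -> f x = f x' -> x = x') ->
     (forall y, Q y -> exists x, P x /\ f x = y) ->
     (forall x x', P x -> P x' -> d (f x) (f x') = d x x') ->
     exists phi : Y -> Y, bijective phi /\
       (forall x y, d (phi x) (phi y) = d x y) /\
       (forall x, P x -> phi x = f x)).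

Definition qnn := {q : rat | 0 <= q}.
Definition qnn_le (a b : qnn) : Prop := sval a <= sval b.
Definition qnn0 : qnn := exist _ 0 (lexx (0 : rat)).

Section TsuOfRum.
Variables (Y : Type) (d : Y -> Y -> rat) (H : rum_axioms d).

Definition rum_dist (x y : Y) : qnn := exist _ (d x y) (rum_ge0 H x y).

Lemma qnn_refl (a : qnn) : qnn_le a a.
Proof. exact: lexx. Qed.

Lemma qnn_anti (a b : qnn) : qnn_le a b -> qnn_le b a -> a = b.
Proof.
move=> h1 h2; apply: val_inj; apply/eqP; rewrite eq_le.
by rewrite /qnn_le in h1 h2; rewrite h1 h2.
Qed.

Lemma qnn_trans (a b c : qnn) : qnn_le a b -> qnn_le b c -> qnn_le a c.
Proof. exact: le_trans. Qed.

Lemma qnn_total (a b : qnn) : qnn_le a b \/ qnn_le b a.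
Proof. rewrite /qnn_le; case/orP: (le_total (sval a) (sval b)) => h; [left|right]; exact: h. Qed.

Lemma qnn0_least (a : qnn) : qnn_le qnn0 a.
Proof. by case: a. Qed.

Lemma rum_dist_sym x y : rum_dist x y = rum_dist y x.
Proof. by apply: val_inj; rewrite /= (rum_sym H). Qed.

Lemma rum_dist_zero x y : rum_dist x y = qnn0 <-> x = y.
Proof.
split.
- move=> h; apply/(rum_zero H); exact: (f_equal sval h).
- by move=> h; apply: val_inj => /=; apply/(rum_zero H).
Qed.

Lemma rum_dist_ultra x y z :
  qnn_le (rum_dist x z) (rum_dist x y) \/ qnn_le (rum_dist x z) (rum_dist y z).
Proof.
rewrite /qnn_le /=; have := rum_ultra H x y z.
case: (leP (d x y) (d y z)) => _ h; [right|left]; exact: h.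
Qed.

Definition tsu_of_rum : tsu :=
  @TSU Y qnn qnn_le qnn0 rum_dist qnn_refl qnn_anti qnn_trans qnn_total
       qnn0_least rum_dist_sym rum_dist_zero rum_dist_ultra.
End TsuOfRum.
Arguments is_UQ {Y} d.
Arguments tsu_of_rum {Y d} H.

(* The class is controlled by two extension properties of a space V: every finite cut
   of distances with 0 below it is filled by a new distance ([cut_ext]), and every
   admissible one-point extension of a finite set of points is realised ([point_ext]).
   A back-and-forth, first between the distance sets and then between the points along
   the distance map already built, shows that a countable space with both properties
   is universal and dc-homogeneous, and that any two such spaces are dc-isomorphic.
   Conversely a universal dc-homogeneous space has both properties: embed the finite
   space containing the new distance (or point) and move the copy of the given data
   back onto it by an automorphism. The same argument with isometries works in U_Q,
   whose distance set Q>=0 fills cuts by density. A concrete space with both properties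
   is W, the finitely supported maps Q>0 -> N at distance the largest argument where
   they differ; its finite subspaces represent all finite spaces, and amalgamation
   takes place in W by extending one embedding along another. *)

From mathcomp Require Import all_boot all_order all_algebra finmap.
From Stdlib Require Import ClassicalEpsilon ProofIrrelevance.
Import Order.TTheory GRing.Theory Num.Theory.
Set Implicit Arguments. Unset Strict Implicit. Unset Printing Implicit Defensive.

Notation cid := (@constructive_indefinite_description _ _).

Lemma sig_eq (T : Type) (P : T -> Prop) (u v : {x | P x}) : sval u = sval v -> u = v.
Proof. by apply: eq_sig_hprop => x; apply: proof_irrelevance. Qed.

Lemma fin_type_sig (T : Type) (P : T -> Prop) : fin_pred P -> fin_type {x | P x}.
Proof.
case=> l hl.
exists (List.flat_map (fun x => match excluded_middle_informative (P x) with
   | left p => [:: exist P x p] | right _ => [::] end) l).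
move=> [x px]; apply/List.in_flat_map; exists x; split; first exact: hl.
by case: excluded_middle_informative => [p|] //; left; apply: sig_eq.
Qed.

Lemma fin_type_option (T : Type) : fin_type T -> fin_type (option T).
Proof.
case=> l hl; exists (None :: List.map Some l) => -[x|]; last by left.
by right; apply: List.in_map.
Qed.

Lemma fin_pred_image (A T : Type) (f : A -> T) :
  fin_type A -> fin_pred (fun y => exists a, y = f a).
Proof. by case=> l hl; exists (List.map f l) => _ [a ->]; apply: List.in_map. Qed.

Lemma exists_filter (T : Type) (l : list T) (P : T -> Prop) :
  exists l', forall x, List.In x l' <-> List.In x l /\ P x.
Proof.
elim: l => [|a l [l' hl']]; first by exists [::] => x; split=> // -[].
case: (classic (P a)) => ha; [exists (a :: l')|exists l'] => x /=; rewrite hl'.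
- by split=> [[<-|[]]|[[<-|]]]; auto.
- by split=> [[]|[[<-|]]]; auto.
Qed.

Lemma inj_surj_bijective (A B : Type) (f : A -> B) :
  injective f -> (forall b, exists a, f a = b) -> bijective f.
Proof.
move=> hi hs; exists (fun b => sval (cid (hs b))) => [a|b]; last exact: proj2_sig (cid (hs b)).
by apply: hi; exact: proj2_sig (cid (hs (f a))).
Qed.

Definition pinv (T : Type) (e : T -> nat) (k : nat) : option T :=
  match excluded_middle_informative (exists x, e x = k) with
  | left h => Some (sval (cid h)) | right _ => None end.

Lemma pinvK (T : Type) (e : T -> nat) : injective e -> forall x, pinv e (e x) = Some x.
Proof.
move=> ei x; rewrite /pinv; case: excluded_middle_informative => [h|[]]; last by exists x.
by congr Some; apply: ei; exact: proj2_sig (cid h).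
Qed.

Definition transfer (A T : Type) (f g : A -> T) (y : T) : T :=
  match excluded_middle_informative (exists a, f a = y) with
  | left h => g (sval (cid h)) | right _ => y end.

Lemma transferE (A T : Type) (f g : A -> T) : injective f -> forall a, transfer f g (f a) = g a.
Proof.
move=> fi a; rewrite /transfer; case: excluded_middle_informative => [h|[]]; last by exists a.
by congr g; apply: fi; exact: proj2_sig (cid h).
Qed.

Lemma In_mem (T : eqType) (x : T) (s : seq T) : List.In x s <-> x \in s.
Proof.
elim: s => [|y s IH] //=; rewrite in_cons; split.
- by case=> [->|/IH ->]; rewrite ?eqxx ?orbT.
- by case/orP=> [/eqP ->|/IH]; [left|right].
Qed.

Lemma count_type_countType (T : countType) : count_type T.
Proof. by exists choice.pickle; apply: (pcan_inj (@choice.pickleK T)). Qed.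

Lemma list_argmin (T : Type) (disp : Order.disp_t) (R : orderType disp) (f : T -> R) (s : list T) :
  s <> [::] -> exists y, List.In y s /\ forall y', List.In y' s -> (f y <= f y')%O.
Proof.
elim: s => [//|a [|b s] IH] _.
  by exists a; split=> [|y' [<-|[]]]; [left|].
have [y [hy ymin]] := IH ltac:(by []).
case: (leP (f a) (f y)) => [ay|ya].
- by exists a; split=> [|y' [<-|/ymin]]; [left| |apply: le_trans ay].
- by exists y; split=> [|y' [<-|/ymin //]]; [right|apply: ltW].
Qed.

Lemma in_map_graph (A B : Type) (g : A -> B) (l : list A) a b :
  List.In (a, b) (List.map (fun a => (a, g a)) l) <-> List.In a l /\ b = g a.
Proof.
split=> [/List.in_map_iff [a' [[<- <-] ha]] //|[ha ->]].
exact: List.in_map (fun a => (a, g a)) _ _ ha.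
Qed.

Lemma fin_pred_list (T : Type) (P : T -> Prop) : fin_pred P ->
  exists l, forall x, List.In x l <-> P x.
Proof.
case=> l0 hl0; have [l hl] := exists_filter l0 P.
by exists l => x; rewrite hl; split=> [[]//|hx]; split=> //; apply: hl0.
Qed.

Lemma fin_pred_code_lt (T : Type) (e : T -> nat) : injective e ->
  forall n, fin_pred (fun x => (e x < n)%N).
Proof.
move=> ei; elim=> [|n [l hl]]; first by exists [::].
exists (if pinv e n is Some x then x :: l else l) => x; rewrite ltnS leq_eqVlt.
case/orP=> [/eqP <-|/hl hx]; first by rewrite pinvK //; left.
by case: pinv => //; right.
Qed.

(** * Back and forth *)

Section BackAndForth.
Variables (X Y : Type) (R : X * Y -> X * Y -> Prop).

Definition coherent (L : list (X * Y)) := forall p q, List.In p L -> List.In q L -> R p q.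

Definition forth_step := forall L x, coherent L -> exists y, coherent ((x, y) :: L).
Definition back_step := forall L y, coherent L -> exists x, coherent ((x, y) :: L).

Lemma coherent_nil : coherent [::].
Proof. by move=> p q []. Qed.

Lemma coherent_cons_in p L : List.In p L -> coherent L -> coherent (p :: L).
Proof. by move=> hp hL q q' /= [<-|hq] [<-|hq']; apply: hL. Qed.

Lemma coherent_cons p L : R p p -> (forall q, List.In q L -> R p q /\ R q p) ->
  coherent L -> coherent (p :: L).
Proof.
move=> hpp hpL hL q q' /= [<-|hq] [<-|hq'] //.
- exact: (hpL _ hq').1.
- exact: (hpL _ hq).2.
- exact: hL.
Qed.

Hypothesis R_graph : forall x y x' y', R (x, y) (x', y') -> (x = x' <-> y = y').
Hypothesis forth : forth_step.

Lemma coherent_total (lX : list X) : (forall x, List.In x lX) ->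
  forall L0, coherent L0 -> exists phi : X -> Y,
  (forall x x', R (x, phi x) (x', phi x')) /\ (forall x y, List.In (x, y) L0 -> phi x = y).
Proof.
move=> cover L0 hL0.
have [L [hL L0L hdom]] : exists L, [/\ coherent L, forall p, List.In p L0 -> List.In p L
    & forall x, List.In x lX -> exists y, List.In (x, y) L].
  elim: lX {cover} => [|x l [L [hL L0L hdom]]]; first by exists L0.
  have [y hy] := forth x hL; exists ((x, y) :: L); split=> //.
  - by move=> p /L0L; right.
  - by move=> x' /= [<-|/hdom [y' hy']]; [exists y; left|exists y'; right].
have defined x : exists y, List.In (x, y) L by apply/hdom/cover.
pose phi x := sval (cid (defined x)).
have phiL x : List.In (x, phi x) L by exact: proj2_sig (cid (defined x)).
exists phi; split=> [x x'|x y hxy]; first exact: hL (phiL x) (phiL x').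
exact/(R_graph (hL _ _ (phiL x) (L0L _ hxy))).
Qed.

Hypothesis back : back_step.
Variables (eX : X -> nat) (eY : Y -> nat).
Hypotheses (eX_inj : injective eX) (eY_inj : injective eY).

Lemma forth_total L x : exists y, coherent L -> coherent ((x, y) :: L).
Proof.
case: (classic (coherent L)) => [/(forth x) [y hy]|hL]; first by exists y.
by have [y _] := forth x coherent_nil; exists y.
Qed.

Lemma back_total L y : exists x, coherent L -> coherent ((x, y) :: L).
Proof.
case: (classic (coherent L)) => [/(back y) [x hx]|hL]; first by exists x.
by have [x _] := back y coherent_nil; exists x.
Qed.

Definition next_y L x := sval (cid (forth_total L x)).
Definition next_x L y := sval (cid (back_total L y)).

Definition add_x L k := if pinv eX k is Some x then (x, next_y L x) :: L else L.
Definition add_y L k := if pinv eY k is Some y then (next_x L y, y) :: L else L.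

Variables (L0 : list (X * Y)).
Fixpoint chain n := if n is k.+1 then add_y (add_x (chain k) k) k else L0.

Lemma add_x_coherent L k : coherent L -> coherent (add_x L k).
Proof. by rewrite /add_x; case: pinv => // x; exact: proj2_sig (cid (forth_total L x)). Qed.

Lemma add_y_coherent L k : coherent L -> coherent (add_y L k).
Proof. by rewrite /add_y; case: pinv => // y; exact: proj2_sig (cid (back_total L y)). Qed.

Lemma add_x_sub L k p : List.In p L -> List.In p (add_x L k).
Proof. by rewrite /add_x; case: pinv => //= *; right. Qed.

Lemma add_y_sub L k p : List.In p L -> List.In p (add_y L k).
Proof. by rewrite /add_y; case: pinv => //= *; right. Qed.

Hypothesis L0_coherent : coherent L0.

Lemma chain_coherent n : coherent (chain n).
Proof. by elim: n => //= n IH; apply/add_y_coherent/add_x_coherent. Qed.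

Lemma chain_mono m n p : (m <= n)%N -> List.In p (chain m) -> List.In p (chain n).
Proof.
move=> /subnKC <-; elim: (n - m)%N => [|k IH]; rewrite ?addn0 // addnS => /IH hp.
exact/add_y_sub/add_x_sub.
Qed.

Lemma chain_rel m n p q : List.In p (chain m) -> List.In q (chain n) -> R p q.
Proof.
move=> hp hq; apply: (@chain_coherent (maxn m n)).
- by apply: chain_mono hp; rewrite leq_maxl.
- by apply: chain_mono hq; rewrite leq_maxr.
Qed.

Definition bf_map x := next_y (chain (eX x)) x.
Definition bf_inv y := next_x (add_x (chain (eY y)) (eY y)) y.

Lemma bf_map_in x : List.In (x, bf_map x) (chain (eX x).+1).
Proof. by rewrite /= {1}/add_x pinvK //; apply: add_y_sub; left. Qed.

Lemma bf_inv_in y : List.In (bf_inv y, y) (chain (eY y).+1).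
Proof. by rewrite /= /add_y pinvK //; left. Qed.

Lemma back_and_forth : exists phi : X -> Y, bijective phi /\
  (forall x x', R (x, phi x) (x', phi x')) /\ (forall x y, List.In (x, y) L0 -> phi x = y).
Proof.
exists bf_map; split; [exists bf_inv|split=> [x x'|x y hxy]].
- by move=> x; apply/(R_graph (chain_rel (bf_inv_in (bf_map x)) (bf_map_in x))).
- by move=> y; apply/esym/(R_graph (chain_rel (bf_inv_in y) (bf_map_in (bf_inv y)))).
- exact: chain_rel (bf_map_in x) (bf_map_in x').
- by apply/esym/(R_graph (chain_rel (m := 0) hxy (bf_map_in x))).
Qed.

End BackAndForth.

Lemma back_of_forth_flip (X Y : Type) (R : X * Y -> X * Y -> Prop) (R' : Y * X -> Y * X -> Prop) :
  (forall p q, R' p q <-> R (p.2, p.1) (q.2, q.1)) -> forth_step R' -> back_step R.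
Proof.
move=> hR' forth L y hL.
have hL' : coherent R' (List.map (fun p => (p.2, p.1)) L).
  move=> _ _ /List.in_map_iff [p [<- hp]] /List.in_map_iff [q [<- hq]].
  by apply/hR'; rewrite -!surjective_pairing; exact: hL.
have [x hx] := forth _ y hL'; exists x => p q hp hq.
have := hx (p.2, p.1) (q.2, q.1); rewrite hR' /= -!surjective_pairing; apply.
- by case: hp => [<-|hp]; [left|right; exact: (List.in_map (fun p => (p.2, p.1)))].
- by case: hq => [<-|hq]; [left|right; exact: (List.in_map (fun p => (p.2, p.1)))].
Qed.

(** * Extension properties *)

Definition dlt (X : tsu) (a b : dst X) := ~ dle X b a.
Arguments dlt : clear implicits.

Lemma dle_zero (X : tsu) a : dle X a (dzero X) <-> a = dzero X.
Proof. by split=> [h|->]; [apply: dle_antisym h (dzero_least _ _)|apply: dle_refl]. Qed.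

Lemma dist_self (X : tsu) x : dist X x x = dzero X.
Proof. exact/dist_zero. Qed.

Lemma order_emb_inj (U V : tsu) g : order_emb U V g -> injective g.
Proof. by move=> hg a b e; apply: dle_antisym; apply/hg; rewrite e; apply: dle_refl. Qed.

Lemma order_emb_cancel (U V : tsu) g g' : order_emb U V g -> cancel g g' -> cancel g' g ->
  order_emb V U g'.
Proof. by move=> hg gK g'K a b; rewrite hg !g'K. Qed.

Definition cut_ext (V : tsu) : Prop :=
  forall lo hi : list (dst V), List.In (dzero V) lo ->
  (forall a b, List.In a lo -> List.In b hi -> dlt V a b) ->
  exists c, (forall a, List.In a lo -> dlt V a c) /\ (forall b, List.In b hi -> dlt V c b).

(* [r y] is the prescribed distance from a new point to [y]; admissibility says that the
   triangles through the new point satisfy the ultrametric inequality. *)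
Definition admissible_radii (V : tsu) (ys : list (pts V)) (r : pts V -> dst V) : Prop :=
  (forall y, List.In y ys -> r y <> dzero V) /\
  (forall y y', List.In y ys -> List.In y' ys ->
     (dle V (dist V y y') (r y) \/ dle V (dist V y y') (r y')) /\
     (dle V (r y) (dist V y y') \/ dle V (r y) (r y'))).

Definition point_ext (V : tsu) : Prop :=
  forall (ys : list (pts V)) r, admissible_radii ys r ->
  exists z, forall y, List.In y ys -> dist V z y = r y.

Section DistanceCompat.
Variables U V : tsu.

Definition dst_compat (p q : dst U * dst V) : Prop :=
  [/\ dle U p.1 q.1 <-> dle V p.2 q.2, dle U q.1 p.1 <-> dle V q.2 p.2
    & p.1 = dzero U <-> p.2 = dzero V].

Lemma dst_compat_graph a b a' b' : dst_compat (a, b) (a', b') -> (a = a' <-> b = b').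
Proof.
case=> /= h1 h2 _; split=> e.
- by apply: dle_antisym; [apply/h1|apply/h2]; rewrite e; apply: dle_refl.
- by apply: dle_antisym; [apply/h1|apply/h2]; rewrite e; apply: dle_refl.
Qed.

Lemma coherent_dst_zero : coherent dst_compat [:: (dzero U, dzero V)].
Proof. by move=> p q [<-|[]] [<-|[]]; split; split=> _ //; apply: dle_refl. Qed.

Lemma coherent_cons_zero L : coherent dst_compat L ->
  coherent dst_compat ((dzero U, dzero V) :: L).
Proof.
move=> hL; apply: coherent_cons => // [|q hq]; first by apply: coherent_dst_zero; left.
have [_ _ hq0] := hL q q hq hq.
have h0 : dle U q.1 (dzero U) <-> dle V q.2 (dzero V) by rewrite !dle_zero.
have h1 : dle U (dzero U) q.1 <-> dle V (dzero V) q.2 by split=> _; apply: dzero_least.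
by split; split.
Qed.

Lemma dst_compat_order_emb h : (forall a b, dst_compat (a, h a) (b, h b)) ->
  order_emb U V h /\ h (dzero U) = dzero V.
Proof.
move=> hR; split=> [a b|]; first by case: (hR a b).
by case: (hR (dzero U) (dzero U)) => _ _ /= [->].
Qed.

Lemma dst_compat_forth : cut_ext V -> forth_step dst_compat.
Proof.
move=> hV L a hL.
case: (classic (exists c, List.In (a, c) L)) => [[c hc]|adom].
  by exists c; apply: coherent_cons_in.
have zero_compat q : List.In q L -> q.1 = dzero U <-> q.2 = dzero V.
  by move=> hq; case: (hL q q hq hq).
case: (classic (a = dzero U)) => [->|a0]; first by exists (dzero V); apply: coherent_cons_zero.
(* [c] realises in [V] the cut that [a] makes in the distances already mapped. *)
have [lo hlo] := exists_filter L (fun p => dle U p.1 a).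
have [hi hhi] := exists_filter L (fun p => ~ dle U p.1 a).
have [c [loc chi]] : exists c, (forall b, List.In b (dzero V :: List.map snd lo) -> dlt V b c) /\
    (forall b, List.In b (List.map snd hi) -> dlt V c b).
  apply: hV; first by left.
  move=> b1 b2 hp /List.in_map_iff [q [<- /hhi [hq qa]]].
  case: hp => [<-|/List.in_map_iff [p [<- /hlo [hp pa]]]].
    rewrite /dlt dle_zero -(zero_compat _ hq) => q0; apply: qa; rewrite q0; exact: dzero_least.
  by case: (hL q p hq hp) => /= h _ _; rewrite /dlt -h => qp; apply: qa; apply: dle_trans pa.
have c0 : c <> dzero V by move=> e; apply: (loc _ (or_introl erefl)); rewrite e; apply: dle_refl.
have side q : List.In q L -> (dle U q.1 a <-> dle V q.2 c) /\ (dle U a q.1 <-> dle V c q.2).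
  move=> hq; have qa : q.1 <> a.
    by move=> e; apply: adom; exists q.2; rewrite -e -surjective_pairing.
  case: (classic (dle U q.1 a)) => qa'.
  - have /loc qc : List.In q.2 (dzero V :: List.map snd lo) by right; apply/List.in_map/hlo.
    by split; split=> // h; [case: (dle_total V q.2 c)|exfalso; apply: qa; apply: dle_antisym].
  - have /chi cq : List.In q.2 (List.map snd hi) by apply/List.in_map/hhi.
    by split; split=> // _; [case: (dle_total V c q.2)|case: (dle_total U a q.1)].
exists c; apply: coherent_cons => //.
  by split; split=> // _; apply: dle_refl.
move=> q hq; have [s1 s2] := side q hq.
by split; split=> //; apply: zero_compat.
Qed.

End DistanceCompat.
Arguments dst_compat : clear implicits.

Lemma dst_compat_flip (U V : tsu) p q :
  dst_compat V U p q <-> dst_compat U V (p.2, p.1) (q.2, q.1).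
Proof. by rewrite /dst_compat /=; split; case=> h1 h2 h3; split; symmetry. Qed.

Section PointCompat.
Variables (U V : tsu) (psi : dst U -> dst V).
Hypotheses (psi_mono : order_emb U V psi) (psi0 : psi (dzero U) = dzero V).

Definition pts_compat (p q : pts U * pts V) : Prop := dist V p.2 q.2 = psi (dist U p.1 q.1).

Lemma pts_compat_graph x y x' y' : pts_compat (x, y) (x', y') -> (x = x' <-> y = y').
Proof.
rewrite /pts_compat /= => e; split=> e'.
- by apply/dist_zero; rewrite e e' dist_self psi0.
- by apply/dist_zero/(order_emb_inj psi_mono); rewrite psi0 -e e' dist_self.
Qed.

Lemma pts_compat_forth : point_ext V -> forth_step pts_compat.
Proof.
move=> hV L x hL.
case: (classic (exists y, List.In (x, y) L)) => [[y hy]|xdom].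
  by exists y; apply: coherent_cons_in.
have [r hr] : exists r : pts V -> dst V,
    forall x' y, List.In (x', y) L -> r y = psi (dist U x x').
  suff hr y : exists v, forall x', List.In (x', y) L -> v = psi (dist U x x').
    by exists (fun y => sval (cid (hr y))) => x' y; exact: proj2_sig (cid (hr y)) x'.
  case: (classic (exists x0, List.In (x0, y) L)) => [[x0 h0]|nodom].
    exists (psi (dist U x x0)) => x' h'.
    by have /pts_compat_graph [_ ->] := hL _ _ h0 h'.
  by exists (dzero V) => x' h'; case: nodom; exists x'.
have in_dom y : List.In y (List.map snd L) -> exists x', List.In (x', y) L.
  by case/List.in_map_iff => -[x' y'] [/= <-]; exists x'.
have [z hz] : exists z, forall y, List.In y (List.map snd L) -> dist V z y = r y.
  apply: hV; split=> [y /in_dom [x' hx']|y y' /in_dom [x1 h1] /in_dom [x2 h2]].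
    rewrite (hr _ _ hx') -psi0 => /(order_emb_inj psi_mono) /dist_zero ex.
    by apply: xdom; exists y; rewrite ex.
  rewrite (hr _ _ h1) (hr _ _ h2) (hL _ _ h1 h2) /= -!psi_mono; split.
  - by rewrite (dist_sym U x x1); exact: dist_ultra.
  - by rewrite (dist_sym U x1 x2); case: (dist_ultra U x x2 x1); auto.
exists z; apply: coherent_cons => // [|[x' y] hq]; first by rewrite /pts_compat /= !dist_self.
have /= e := hz _ (List.in_map snd _ _ hq); rewrite (hr _ _ hq) in e.
by split; rewrite /pts_compat //= (dist_sym V y) e (dist_sym U x).
Qed.

End PointCompat.
Arguments pts_compat : clear implicits.

Lemma pts_compat_flip (U V : tsu) psi psi' : cancel psi psi' -> cancel psi' psi ->
  forall p q, pts_compat V U psi' p q <-> pts_compat U V psi (p.2, p.1) (q.2, q.1).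
Proof.
move=> psiK psi'K p q; rewrite /pts_compat /=.
by split=> [->|->]; rewrite ?psi'K ?psiK.
Qed.

Lemma dst_iso_extend (U V : tsu) : count_type (dst U) -> count_type (dst V) ->
  cut_ext U -> cut_ext V -> forall Ld, coherent (dst_compat U V) Ld ->
  exists psi, [/\ bijective psi, order_emb U V psi, psi (dzero U) = dzero V
    & forall a b, List.In (a, b) Ld -> psi a = b].
Proof.
move=> [eU eU_inj] [eV eV_inj] cU cV Ld hLd.
have back := back_of_forth_flip (@dst_compat_flip U V) (dst_compat_forth cU).
have [psi [bij [hR hLd']]] :=
  back_and_forth (@dst_compat_graph U V) (dst_compat_forth cV) back eU_inj eV_inj hLd.
by have [? ?] := dst_compat_order_emb hR; exists psi.
Qed.

Lemma pts_iso_extend (U V : tsu) psi : count_type (pts U) -> count_type (pts V) ->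
  point_ext U -> point_ext V -> bijective psi -> order_emb U V psi ->
  psi (dzero U) = dzero V -> forall Lp, coherent (pts_compat U V psi) Lp ->
  exists phi, [/\ bijective phi, forall x x', dist V (phi x) (phi x') = psi (dist U x x')
    & forall x y, List.In (x, y) Lp -> phi x = y].
Proof.
move=> [eU eU_inj] [eV eV_inj] pU pV [psi' psiK psi'K] ho h0 Lp hLp.
have ho' := order_emb_cancel ho psiK psi'K.
have h0' : psi' (dzero V) = dzero U by rewrite -h0 psiK.
have back := back_of_forth_flip (pts_compat_flip psiK psi'K) (pts_compat_forth ho' h0' pU).
have [phi [bij [hR hLp']]] :=
  back_and_forth (pts_compat_graph ho h0) (pts_compat_forth ho h0 pV) back eU_inj eV_inj hLp.
by exists phi.
Qed.

Definition dists_in (U V : tsu) (Ld : list (dst U * dst V)) (Lp : list (pts U * pts V)) :=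
  forall p q, List.In p Lp -> List.In q Lp -> List.In (dist U p.1 q.1, dist V p.2 q.2) Ld.

Lemma dists_in_nil (U V : tsu) (Ld : list (dst U * dst V)) : dists_in Ld [::].
Proof. by move=> p q []. Qed.

Lemma coherent_pts_compat (U V : tsu) psi Ld Lp : dists_in Ld Lp ->
  (forall a b, List.In (a, b) Ld -> psi a = b) -> coherent (pts_compat U V psi) Lp.
Proof. by move=> hLp hLd p q hp hq; rewrite /pts_compat (hLd _ _ (hLp _ _ hp hq)). Qed.

Lemma dc_iso_extend (U V : tsu) : countable_tsu U -> countable_tsu V ->
  cut_ext U -> cut_ext V -> point_ext U -> point_ext V ->
  forall Ld Lp, coherent (dst_compat U V) Ld -> dists_in Ld Lp ->
  exists phi psi, [/\ dc_iso U V phi psi, forall x y, List.In (x, y) Lp -> phi x = y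
    & forall a b, List.In (a, b) Ld -> psi a = b].
Proof.
move=> [cpU cdU] [cpV cdV] cU cV pU pV Ld Lp hLd hLp.
have [psi [bpsi ho h0 hLd']] := dst_iso_extend cdU cdV cU cV hLd.
have [phi [bphi hd hLp']] :=
  pts_iso_extend cpU cpV pU pV bpsi ho h0 (coherent_pts_compat hLp hLd').
by exists phi, psi; split=> //; split=> //; split; [apply: bij_inj|].
Qed.

Lemma dc_emb_extend (B V : tsu) : finite_tsu B -> cut_ext V -> point_ext V ->
  forall Ld Lp, coherent (dst_compat B V) Ld -> dists_in Ld Lp ->
  exists f h, [/\ dc_emb B V f h, forall x y, List.In (x, y) Lp -> f x = y
    & forall a b, List.In (a, b) Ld -> h a = b].
Proof.
move=> [[lp cp] [ld cd]] cV pV Ld Lp hLd hLp.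
have [h [hR hLd']] := coherent_total (@dst_compat_graph B V) (dst_compat_forth cV) cd hLd.
have [ho h0] := dst_compat_order_emb hR.
have [f [hf hLp']] := coherent_total (pts_compat_graph ho h0) (pts_compat_forth ho h0 pV) cp
  (coherent_pts_compat hLp hLd').
have f_inj : injective f by move=> x x' /(pts_compat_graph ho h0 (hf x x')).
by exists f, h; split=> //; split.
Qed.

Lemma dst_compat_of_embs (A B C : tsu) u v : order_emb A B u -> u (dzero A) = dzero B ->
  order_emb A C v -> v (dzero A) = dzero C -> forall a a', dst_compat B C (u a, v a) (u a', v a').
Proof.
move=> umono u0 vmono v0 a a'; split=> /=; rewrite -?umono -?vmono //.
by rewrite -u0 -v0; split=> e; [rewrite (order_emb_inj umono e)|rewrite (order_emb_inj vmono e)].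
Qed.

Lemma dc_emb_extend_along (A B V : tsu) a1 g1 k hk : finite_tsu A -> finite_tsu B ->
  cut_ext V -> point_ext V -> dc_emb A B a1 g1 -> dc_emb A V k hk ->
  exists b hb, [/\ dc_emb B V b hb, forall x, b (a1 x) = k x & forall a, hb (g1 a) = hk a].
Proof.
move=> [[lA cA] [lAd cAd]] fB cV pV e1 e.
have [_ [g1mono [g10 d1]]] := e1; have [_ [hkmono [hk0 dk]]] := e.
pose Ld := List.map (fun a => (g1 a, hk a)) lAd; pose Lp := List.map (fun x => (a1 x, k x)) lA.
have hLd : coherent (dst_compat B V) Ld.
  move=> _ _ /List.in_map_iff [a [<- _]] /List.in_map_iff [a' [<- _]].
  exact: dst_compat_of_embs.
have hLp : dists_in Ld Lp.
  move=> _ _ /List.in_map_iff [x [<- _]] /List.in_map_iff [y [<- _]] /=.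
  by rewrite d1 dk; apply: (List.in_map (fun a => (g1 a, hk a))).
have [b [hb [eb ebp ebd]]] := dc_emb_extend fB cV pV hLd hLp.
exists b, hb; split=> // [x|a]; [apply: ebp|apply: ebd].
- exact: (List.in_map (fun x => (a1 x, k x))).
- exact: (List.in_map (fun a => (g1 a, hk a))).
Qed.

Lemma ext_universal (V : tsu) : cut_ext V -> point_ext V ->
  forall B, finite_tsu B -> dc_embeds B V.
Proof.
move=> cV pV B fB.
have [f [h [? _ _]]] := dc_emb_extend fB cV pV (@coherent_dst_zero B V) (dists_in_nil _).
by exists f, h.
Qed.

Lemma ext_dc_isomorphic (U V : tsu) : countable_tsu U -> countable_tsu V ->
  cut_ext U -> cut_ext V -> point_ext U -> point_ext V -> dc_isomorphic U V.
Proof.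
move=> cU cV oU oV pU pV.
have [phi [psi [? _ _]]] := dc_iso_extend cU cV oU oV pU pV (@coherent_dst_zero U V)
  (dists_in_nil _).
by exists phi, psi.
Qed.

Lemma ext_dc_homogeneous (X : tsu) : countable_tsu X -> cut_ext X -> point_ext X ->
  dc_homogeneous X.
Proof.
move=> cX oX pX P E Q F f g [[E0 hPE] [finP finE]] _ [_ [_ [_ [_ [_ [gmono [g0 fdist]]]]]]].
have [lE hE] := fin_pred_list finE; have [lP hP] := fin_pred_list finP.
pose Ld := List.map (fun a => (a, g a)) lE; pose Lp := List.map (fun x => (x, f x)) lP.
have hLd : coherent (dst_compat X X) Ld.
  move=> [a ga] [b gb] /in_map_graph [/hE Ea /= ->] /in_map_graph [/hE Eb /= ->].
  split=> /=; try exact: gmono.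
  split=> [->|e] //; apply/dle_zero/(gmono _ _ Ea E0); rewrite e g0; exact: dle_refl.
have hLp : dists_in Ld Lp.
  move=> [x fx] [y fy] /in_map_graph [/hP Px /= ->] /in_map_graph [/hP Py /= ->] /=.
  by rewrite fdist //; apply/in_map_graph; split=> //; apply/hE/hPE.
have [phi [psi [iso ephi epsi]]] := dc_iso_extend cX cX oX oX pX pX hLd hLp.
exists phi, psi; split=> //; split=> [x /hP|a /hE] h; [apply: ephi|apply: epsi]; exact/in_map_graph.
Qed.

Lemma ext_iso_homogeneous (X : tsu) : count_type (pts X) -> point_ext X -> iso_homogeneous X.
Proof.
move=> cX pX P Q E f [[_ _] [finP _]] _ [_ [_ [_ [_ [_ [_ [_ fdist]]]]]]].
have [lP hP] := fin_pred_list finP.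
have hLp : coherent (pts_compat X X id) (List.map (fun x => (x, f x)) lP).
  move=> [x fx] [y fy] /in_map_graph [/hP Px /= ->] /in_map_graph [/hP Py /= ->].
  exact: fdist.
have id_bij : bijective (@id (dst X)) by exists id.
have [phi [bphi hd ephi]] := pts_iso_extend cX cX pX pX id_bij (fun a b => iff_refl _) erefl hLp.
exists phi; split=> [|x /hP hx]; last by apply: ephi; apply/in_map_graph.
by split=> //; split; [apply: bij_inj|].
Qed.

(** * Fraisse limits and the extension properties *)

Section Closure.
Variables (X : tsu) (ps : list (pts X)) (es : list (dst X)).

Definition close : list (dst X) :=
  dzero X :: es ++ List.flat_map (fun p => List.map (dist X p) ps) ps.

Lemma close0 : List.In (dzero X) close.
Proof. by left. Qed.

Lemma close_es a : List.In a es -> List.In a close.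
Proof. by move=> h; right; apply: List.in_or_app; left. Qed.

Lemma close_dist p q : List.In p ps -> List.In q ps -> List.In (dist X p q) close.
Proof.
move=> hp hq; right; apply/List.in_or_app; right; apply/List.in_flat_map.
by exists p; split=> //; apply: List.in_map.
Qed.

Lemma closeP a : List.In a close <->
  [\/ a = dzero X, List.In a es | exists p q, [/\ List.In p ps, List.In q ps & a = dist X p q]].
Proof.
split=> [[<-|/List.in_app_iff [h|/List.in_flat_map [p [hp /List.in_map_iff [q [<- hq]]]]]]|].
- by constructor 1.
- by constructor 2.
- by constructor 3; exists p, q.
- by case=> [->|/close_es //|[p [q [hp hq ->]]]]; [exact: close0|exact: close_dist].
Qed.

End Closure.

Lemma countable_exhaustion (X : tsu) : countable_tsu X ->
  exists (A : nat -> pts X -> Prop) (E : nat -> dst X -> Prop),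
     (forall n, fin_substr X (A n) (E n)) /\
     (forall n x, A n x -> A n.+1 x) /\ (forall n a, E n a -> E n.+1 a) /\
     (forall x, exists n, A n x) /\ (forall a, exists n, E n a).
Proof.
move=> [[eP eP_inj] [eD eD_inj]].
pose A n x := (eP x < n)%N.
pose E n a := [\/ a = dzero X, (eD a < n)%N | exists x y, [/\ A n x, A n y & a = dist X x y]].
exists A, E; split; last split; last split; last split.
- move=> n; split; first by split=> [|x y hx hy]; [constructor 1|constructor 3; exists x, y].
  have [lP hP] := fin_pred_code_lt eP_inj n; have [lD hD] := fin_pred_code_lt eD_inj n.
  split; first by exists lP.
  exists (close lP lD) => a [->|/hD|[x [y [/hP hx /hP hy ->]]]]; 
    [exact: close0|exact: close_es|exact: close_dist].
- by move=> n x; apply: leqW.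
- by move=> n a [->|/leqW|[x [y [/leqW hx /leqW hy ->]]]]; 
    [constructor 1|constructor 2|constructor 3; exists x, y].
- by move=> x; exists (eP x).+1; apply: ltnSn.
- by move=> a; exists (eD a).+1; constructor 2; apply: ltnSn.
Qed.

Lemma ext_fraisse_limit (X : tsu) : countable_tsu X -> cut_ext X -> point_ext X ->
  is_fraisse_limit X.
Proof.
move=> cX oX pX; split=> //; split; first exact: countable_exhaustion.
by split; [exact: ext_universal|exact: ext_dc_homogeneous].
Qed.

Section InducedTsu.
Variables (X : tsu) (es : list (dst X)) (es0 : List.In (dzero X) es).
Variables (T : Type) (d : T -> T -> dst X).
Hypotheses (d_in : forall x y, List.In (d x y) es) (d_sym : forall x y, d x y = d y x)
  (d_zero : forall x y, d x y = dzero X <-> x = y)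
  (d_ultra : forall x y z, dle X (d x z) (d x y) \/ dle X (d x z) (d y z)).

Definition listed_dst := {a : dst X | List.In a es}.
Definition listed_le (a b : listed_dst) := dle X (sval a) (sval b).
Definition listed_zero : listed_dst := exist _ (dzero X) es0.
Definition induced_dist (x y : T) : listed_dst := exist _ (d x y) (d_in x y).

Lemma listed_le_refl a : listed_le a a.
Proof. exact: dle_refl. Qed.

Lemma listed_le_antisym a b : listed_le a b -> listed_le b a -> a = b.
Proof. by move=> h1 h2; apply: sig_eq; apply: dle_antisym. Qed.

Lemma listed_le_trans a b c : listed_le a b -> listed_le b c -> listed_le a c.
Proof. exact: dle_trans. Qed.

Lemma listed_le_total a b : listed_le a b \/ listed_le b a.
Proof. exact: dle_total. Qed.

Lemma listed_zero_least a : listed_le listed_zero a.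
Proof. exact: dzero_least. Qed.

Lemma induced_dist_sym x y : induced_dist x y = induced_dist y x.
Proof. exact/sig_eq/d_sym. Qed.

Lemma induced_dist_zero x y : induced_dist x y = listed_zero <-> x = y.
Proof.
split=> [/(f_equal sval)/d_zero //|e].
by apply: sig_eq; apply/d_zero.
Qed.

Lemma induced_dist_ultra x y z : listed_le (induced_dist x z) (induced_dist x y) \/
  listed_le (induced_dist x z) (induced_dist y z).
Proof. exact: d_ultra. Qed.

Definition induced_tsu : tsu :=
  @TSU T listed_dst listed_le listed_zero induced_dist listed_le_refl listed_le_antisym
    listed_le_trans listed_le_total listed_zero_least induced_dist_sym induced_dist_zero
    induced_dist_ultra.

Lemma induced_tsu_finite : fin_type T -> finite_tsu induced_tsu.
Proof. by move=> fT; split=> //; apply: fin_type_sig; exists es. Qed.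

End InducedTsu.

Section Span.
Variables (X : tsu) (ps : list (pts X)) (es : list (dst X)).

Definition span_dist (x y : {p | List.In p ps}) := dist X (sval x) (sval y).

Lemma span_dist_in x y : List.In (span_dist x y) (close ps es).
Proof. by apply: close_dist; [exact: proj2_sig x|exact: proj2_sig y]. Qed.

Lemma span_dist_sym x y : span_dist x y = span_dist y x.
Proof. exact: dist_sym. Qed.

Lemma span_dist_zero x y : span_dist x y = dzero X <-> x = y.
Proof. by split=> [/dist_zero /sig_eq //|->]; apply: dist_self. Qed.

Lemma span_dist_ultra x y z :
  dle X (span_dist x z) (span_dist x y) \/ dle X (span_dist x z) (span_dist y z).
Proof. exact: dist_ultra. Qed.

Definition span : tsu := induced_tsu (close0 ps es) span_dist_in span_dist_sym
  span_dist_zero span_dist_ultra.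

Lemma span_finite : finite_tsu span.
Proof. by apply: induced_tsu_finite; apply: fin_type_sig; exists ps. Qed.

Lemma span_incl : dc_emb span X sval sval.
Proof. by split=> [x y /sig_eq //|]; split. Qed.

Lemma dc_emb_corestrict (A : tsu) f g : dc_emb A X f g ->
  (forall x, List.In (f x) ps) -> (forall a, List.In (g a) (close ps es)) ->
  exists f' g', [/\ dc_emb A span f' g', forall x, sval (f' x) = f x & forall a, sval (g' a) = g a].
Proof.
move=> [fi [gmono [g0 fdist]]] hf hg.
exists (fun x => exist _ (f x) (hf x)), (fun a => exist _ (g a) (hg a)); split=> //.
split=> [x y /(f_equal sval) /fi //|]; split=> // ; split=> [|x y]; apply: sig_eq => //=.
exact: fdist.
Qed.

End Span.
Arguments span : clear implicits.

Lemma dc_iso_span_image (A X : tsu) f g (lA : list (pts A)) (lD : list (dst A)) :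
  (forall x, List.In x lA) -> (forall a, List.In a lD) -> dc_emb A X f g ->
  dc_isomorphic A (span X (List.map f lA) (List.map g lD)).
Proof.
move=> cA cD e; have [_ [_ [g0 fdist]]] := e.
have [f' [g' [e' ef eg]]] := dc_emb_corestrict e (fun x => List.in_map f _ _ (cA x))
  (fun a => close_es _ (List.in_map g _ _ (cD a))).
have [fi' [gmono' _]] := e'.
exists f', g'; split=> //; split; apply: inj_surj_bijective => //.
- move=> [p hp]; case/List.in_map_iff: (hp) => x [ex _].
  by exists x; apply: sig_eq; rewrite /= ef.
- exact: order_emb_inj gmono'.
- move=> [a ha].
  case/closeP: (ha) => [a0|/List.in_map_iff [b [eb _]]|[p [q [hp hq ea]]]].
  + by exists (dzero A); apply: sig_eq; rewrite /= eg g0 a0.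
  + by exists b; apply: sig_eq; rewrite /= eg.
  + case/List.in_map_iff: hp => x [ex _]; case/List.in_map_iff: hq => y [ey _].
    by exists (dist A x y); apply: sig_eq; rewrite /= eg -fdist ex ey.
Qed.

Lemma common_span (A B X : tsu) f g f' g' : finite_tsu A -> finite_tsu B ->
  dc_emb A X f g -> dc_emb B X f' g' ->
  exists D b1 h1 b2 h2, [/\ finite_tsu D, dc_emb A D b1 h1, dc_emb B D b2 h2,
    forall x y, f x = f' y -> b1 x = b2 y & forall a b, g a = g' b -> h1 a = h2 b].
Proof.
move=> [[lA cA] [lAd cAd]] [[lB cB] [lBd cBd]] e e'.
pose ps := List.map f lA ++ List.map f' lB; pose es := List.map g lAd ++ List.map g' lBd.
have [b1 [h1 [e1 eb1 eh1]]] := dc_emb_corestrict (ps := ps) (es := es) e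
  (fun x => List.in_or_app _ _ _ (or_introl (List.in_map f _ _ (cA x))))
  (fun a => close_es _ (List.in_or_app _ _ _ (or_introl (List.in_map g _ _ (cAd a))))).
have [b2 [h2 [e2 eb2 eh2]]] := dc_emb_corestrict (ps := ps) (es := es) e'
  (fun x => List.in_or_app _ _ _ (or_intror (List.in_map f' _ _ (cB x))))
  (fun a => close_es _ (List.in_or_app _ _ _ (or_intror (List.in_map g' _ _ (cBd a))))).
exists (span X ps es), b1, h1, b2, h2; split=> //; first exact: span_finite.
- by move=> x y exy; apply: sig_eq; rewrite eb1 eb2.
- by move=> a b eab; apply: sig_eq; rewrite eh1 eh2.
Qed.

Lemma dc_emb_comp (A B C : tsu) f g f' g' : dc_emb A B f g -> dc_emb B C f' g' ->
  dc_emb A C (f' \o f) (g' \o g).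
Proof.
move=> [fi [gmono [g0 fdist]]] [fi' [gmono' [g0' fdist']]].
split=> [x y /fi' /fi //|]; split=> [a b|]; first by rewrite gmono gmono'.
by split=> [|x y] /=; rewrite ?g0 ?g0' ?fdist' ?fdist.
Qed.

Lemma image_fin_substr (A U : tsu) f h : finite_tsu A -> dc_emb A U f h ->
  fin_substr U (fun y => exists x, y = f x) (fun b => exists a, b = h a).
Proof.
move=> [fP fD] [_ [_ [h0 fdist]]]; split; last by split; apply: fin_pred_image.
by split=> [|_ _ [x ->] [y ->]]; [exists (dzero A)|exists (dist A x y)].
Qed.

Lemma dc_homogeneous_emb_transitive (U A : tsu) : dc_homogeneous U -> finite_tsu A ->
  forall f h f' h', dc_emb A U f h -> dc_emb A U f' h' ->
  exists phi psi, [/\ dc_iso U U phi psi, forall x, phi (f x) = f' x & forall a, psi (h a) = h' a].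
Proof.
move=> hom fA f h f' h' e e'.
have [fi [hmono [h0 fdist]]] := e; have [fi' [hmono' [h0' fdist']]] := e'.
have hi := order_emb_inj hmono; have hi' := order_emb_inj hmono'.
have partial : sub_dc_iso U (fun y => exists x, y = f x) (fun b => exists a, b = h a)
    (fun y => exists x, y = f' x) (fun b => exists a, b = h' a) (transfer f f') (transfer h h').
  split; first by move=> _ [x ->]; rewrite transferE //; exists x.
  split; first by move=> _ _ [x ->] [y ->]; rewrite !transferE // => /fi' ->.
  split; first by move=> _ [x ->]; exists (f x); split; [exists x|rewrite transferE].
  split; first by move=> _ [a ->]; rewrite transferE //; exists a.
  split; first by move=> _ [a ->]; exists (h a); split; [exists a|rewrite transferE].
  split; first by move=> _ _ [a ->] [b ->]; rewrite !transferE // -hmono hmono'.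
  split; first by rewrite -{1}h0 transferE.
  by move=> _ _ [x ->] [y ->]; rewrite !transferE // fdist fdist' transferE.
have [phi [psi [iso [ephi epsi]]]] :=
  hom _ _ _ _ _ _ (image_fin_substr fA e) (image_fin_substr fA e') partial.
exists phi, psi; split=> // [x|a].
- by rewrite ephi ?transferE //; exists x.
- by rewrite epsi ?transferE //; exists a.
Qed.

Section CutTsu.
Variables (A : tsu) (low : dst A -> Prop).
Hypotheses (low0 : low (dzero A)) (low_down : forall a b, dle A b a -> low a -> low b).

(* [None] is a new distance placed just above the lower set [low]. *)
Definition cut_le (x y : option (dst A)) : Prop :=
  match x, y with
  | None, None => True | None, Some b => ~ low b
  | Some a, None => low a | Some a, Some b => dle A a b
  end.

Lemma cut_le_refl x : cut_le x x.
Proof. by case: x => //= a; apply: dle_refl. Qed.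

Lemma cut_le_antisym x y : cut_le x y -> cut_le y x -> x = y.
Proof. by case: x y => [a|] [b|] //= h1 h2; congr Some; apply: dle_antisym. Qed.

Lemma cut_le_trans x y z : cut_le x y -> cut_le y z -> cut_le x z.
Proof.
case: x y z => [a|] [b|] [c|] //=.
- exact: dle_trans.
- by move=> ab /(low_down ab).
- move=> la lc; case: (dle_total A a c) => // ca; case: lc; exact: low_down ca la.
- by move=> lb bc lc; apply: lb; exact: low_down bc lc.
Qed.

Lemma cut_le_total x y : cut_le x y \/ cut_le y x.
Proof.
case: x y => [a|] [b|] /=; [exact: dle_total| | |by left].
- by case: (classic (low a)); [left|right].
- by case: (classic (low b)); [right|left].
Qed.

Lemma cut_zero_least x : cut_le (Some (dzero A)) x.
Proof. by case: x => [a|] //=; apply: dzero_least. Qed.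

Definition cut_dist (x y : pts A) := Some (dist A x y).

Lemma cut_dist_sym x y : cut_dist x y = cut_dist y x.
Proof. by rewrite /cut_dist dist_sym. Qed.

Lemma cut_dist_zero x y : cut_dist x y = Some (dzero A) <-> x = y.
Proof. by rewrite -dist_zero; split=> [[]|<-]. Qed.

Lemma cut_dist_ultra x y z :
  cut_le (cut_dist x z) (cut_dist x y) \/ cut_le (cut_dist x z) (cut_dist y z).
Proof. exact: dist_ultra. Qed.

Definition cut_tsu : tsu :=
  @TSU (pts A) (option (dst A)) cut_le (Some (dzero A)) cut_dist cut_le_refl cut_le_antisym
    cut_le_trans cut_le_total cut_zero_least cut_dist_sym cut_dist_zero cut_dist_ultra.

Lemma cut_tsu_finite : finite_tsu A -> finite_tsu cut_tsu.
Proof. by case=> fP fD; split=> //; apply: fin_type_option. Qed.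

Lemma cut_tsu_emb : dc_emb A cut_tsu id Some.
Proof. by split=> // x y ->. Qed.

End CutTsu.

Lemma fraisse_cut_ext (U : tsu) : (forall B, finite_tsu B -> dc_embeds B U) ->
  dc_homogeneous U -> cut_ext U.
Proof.
move=> univ hom lo hi lo0 hcut.
pose S := span U [::] (lo ++ hi).
pose low (a : dst S) := List.In (sval a) lo.
have low_down a b : dle S b a -> low a -> low b.
  rewrite /low => ba la; case/closeP: (proj2_sig b) => [->//|/List.in_app_iff [//|hb]|[? [? [[]]]]].
  by case: (hcut _ _ la hb).
have fS : finite_tsu S by apply: span_finite.
have [f [h e]] := univ _ (cut_tsu_finite lo0 low_down fS).
have [phi [psi [[[_ [psi_mono _]] _] _ epsi]]] :=
  dc_homogeneous_emb_transitive hom fS (dc_emb_comp (cut_tsu_emb lo0 low_down) e) (span_incl _ _).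
have [_ [h_mono _]] := e.
have inS a : List.In a (lo ++ hi) -> List.In a (close [::] (lo ++ hi)) by apply: close_es.
exists (psi (h None)); split=> [a la|b hb].
- pose a' : dst S := exist _ a (inS a (List.in_or_app _ _ _ (or_introl la))).
  have <- : psi (h (Some a')) = a by exact: epsi.
  by rewrite /dlt -psi_mono -h_mono /= => /(_ la).
- pose b' : dst S := exist _ b (inS b (List.in_or_app _ _ _ (or_intror hb))).
  have <- : psi (h (Some b')) = b by exact: epsi.
  by rewrite /dlt -psi_mono -h_mono /= => lb; apply: (hcut _ _ lb hb); apply: dle_refl.
Qed.

Section OnePointSpace.
Variables (V : tsu) (ys : list (pts V)) (r : pts V -> dst V).
Hypothesis r_adm : admissible_radii ys r.

Let es := close ys (List.map r ys).
Let Y := {y | List.In y ys}.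

(* [None] is the new point, at distance [r y] from each [Some y]. *)
Definition one_point_dist (x y : option Y) : dst V :=
  match x, y with
  | Some a, Some b => dist V (sval a) (sval b)
  | None, Some b | Some b, None => r (sval b)
  | None, None => dzero V
  end.

Lemma one_point_dist_in x y : List.In (one_point_dist x y) es.
Proof.
case: x y => [a|] [b|] /=; try exact: close0.
- by apply: close_dist; [exact: proj2_sig a|exact: proj2_sig b].
- by apply/close_es/List.in_map; exact: proj2_sig a.
- by apply/close_es/List.in_map; exact: proj2_sig b.
Qed.

Lemma one_point_dist_sym x y : one_point_dist x y = one_point_dist y x.
Proof. by case: x y => [a|] [b|] //=; rewrite dist_sym. Qed.

Lemma one_point_dist_zero x y : one_point_dist x y = dzero V <-> x = y.
Proof.
have [r0 _] := r_adm.
case: x y => [a|] [b|] //=.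
- by rewrite dist_zero; split=> [/sig_eq ->|[->]].
- by split=> // /(r0 _ (proj2_sig a)).
- by split=> // /(r0 _ (proj2_sig b)).
Qed.

Lemma one_point_dist_ultra x y z : dle V (one_point_dist x z) (one_point_dist x y) \/
  dle V (one_point_dist x z) (one_point_dist y z).
Proof.
have [_ radm] := r_adm.
case: x y z => [a|] [b|] [c|] /=; try by [left; apply: dle_refl|right; apply: dle_refl].
- exact: dist_ultra.
- exact: (radm _ _ (proj2_sig a) (proj2_sig b)).2.
- exact: (radm _ _ (proj2_sig a) (proj2_sig c)).1.
- by case: (radm _ _ (proj2_sig c) (proj2_sig b)).2; rewrite dist_sym; auto.
- by left; apply: dzero_least.
Qed.

Definition one_point_space : tsu :=
  induced_tsu (close0 _ _) one_point_dist_in one_point_dist_sym one_point_dist_zero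
    one_point_dist_ultra.

Lemma one_point_space_finite : finite_tsu one_point_space.
Proof. by apply/induced_tsu_finite/fin_type_option/fin_type_sig; exists ys. Qed.

Lemma span_one_point_emb : dc_emb (span V ys (List.map r ys)) one_point_space Some id.
Proof. by split=> [x y [] //|]; split=> //; split=> // x y; apply: sig_eq. Qed.

End OnePointSpace.

Lemma fraisse_point_ext (U : tsu) : (forall B, finite_tsu B -> dc_embeds B U) ->
  dc_homogeneous U -> point_ext U.
Proof.
move=> univ hom ys r r_adm.
have fS : finite_tsu (span U ys (List.map r ys)) by apply: span_finite.
have [f [h e]] := univ _ (one_point_space_finite r_adm).
have [phi [psi [[[_ [_ [_ phi_dist]]] _] ephi epsi]]] :=
  dc_homogeneous_emb_transitive hom fS (dc_emb_comp (span_one_point_emb r_adm) e) (span_incl _ _).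
have [_ [_ [_ fdist]]] := e.
exists (phi (f None)) => y hy.
have phi_y : phi (f (Some (exist _ y hy))) = y by exact: ephi.
by rewrite -{1}phi_y phi_dist fdist; apply: epsi.
Qed.

(** * Rational ultrametric spaces *)

Section RationalSpaces.
Local Open Scope ring_scope.
Variables (Y : Type) (d : Y -> Y -> rat) (H : rum_axioms d).

Lemma rum_cut_ext : cut_ext (tsu_of_rum H).
Proof.
move=> lo hi lo0 hcut.
pose m := \big[Num.max/0]_(a <- lo) sval a.
pose M := \big[Num.min/(m + 1)]_(b <- hi) sval b.
have lo_m a : List.In a lo -> sval a <= m by move/In_mem => ha; apply: le_bigmax_seq.
have M_hi b : List.In b hi -> M <= sval b by move/In_mem => hb; apply: ge_bigmin_seq.
have mM : m < M.
  rewrite /M big_seq; apply: lt_bigmin => [|b /In_mem hb]; first by rewrite ltrDl.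
  rewrite /m big_seq; apply: bigmax_lt => [|a /In_mem ha]; rewrite ltNge; apply/negP.
  - exact: hcut _ _ lo0 hb.
  - exact: hcut _ _ ha hb.
have [mc cM] := midf_lt mM.
have c0 : 0 <= (m + M) / 2 by apply: le_trans (ltW mc); apply: bigmax_ge_id.
exists (exist (fun q : rat => 0 <= q) _ c0 : qnn).
split=> [a /lo_m am|b /M_hi Mb]; rewrite /dlt /= /qnn_le /=; apply/negP; rewrite -ltNge.
- exact: le_lt_trans am mc.
- exact: lt_le_trans cM Mb.
Qed.

Lemma rum_axioms_of_tsu (X : tsu) (m : dst X -> rat) :
  (forall a b, dle X a b <-> m a <= m b) -> m (dzero X) = 0 ->
  rum_axioms (fun x y => m (dist X x y)).
Proof.
move=> m_mono m0; split=> [x y|x y|x y|x y z].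
- by rewrite -m0; apply/m_mono/dzero_least.
- by rewrite dist_sym.
- rewrite -dist_zero -m0; split=> [e|->] //.
  by apply: dle_antisym; apply/m_mono; rewrite e.
- by rewrite le_max; case: (dist_ultra X x y z) => /m_mono ->; rewrite ?orbT.
Qed.

Lemma UQ_emb_transitive : is_UQ d ->
  forall (Z : Type) (f f' : Z -> Y), fin_type Z -> injective f' ->
  (forall z z', d (f z) (f z') = d (f' z) (f' z')) ->
  exists phi : Y -> Y, (forall x y, d (phi x) (phi y) = d x y) /\ forall z, phi (f z) = f' z.
Proof.
move=> [_ [_ [_ hom]]] Z f f' fZ fi' fd.
have fi : injective f.
  by move=> z z' e; apply/fi'/(rum_zero H); rewrite -fd e; apply/(rum_zero H).
have [phi [_ [phi_d ephi]]] :
    exists phi, bijective phi /\ (forall x y, d (phi x) (phi y) = d x y) /\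
      forall x, (exists z, x = f z) -> phi x = transfer f f' x.
  apply: (hom _ _ _ (fin_pred_image f fZ) (fin_pred_image f' fZ)).
  - by move=> _ [z ->]; rewrite transferE //; exists z.
  - by move=> _ _ [z ->] [z' ->]; rewrite !transferE // => /fi' ->.
  - by move=> _ [z ->]; exists (f z); split; [exists z|rewrite transferE].
  - by move=> _ _ [z ->] [z' ->]; rewrite !transferE.
by exists phi; split=> // z; rewrite ephi ?transferE //; exists z.
Qed.

Lemma UQ_point_ext : is_UQ d -> point_ext (tsu_of_rum H).
Proof.
move=> hUQ ys r r_adm.
pose B := one_point_space r_adm.
have dB_rum : rum_axioms (fun x y : pts B => sval (sval (dist B x y))).
  exact: (@rum_axioms_of_tsu B (fun a => sval (sval a)) (fun a b => iff_refl _) erefl).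
have [_ [_ [univ _]]] := hUQ.
have [f fd] := univ _ _ (proj1 (one_point_space_finite r_adm)) dB_rum.
have fY : fin_type {y | List.In y ys} by apply: fin_type_sig; exists ys.
have [phi [phi_d ephi]] :=
  UQ_emb_transitive hUQ (f := f \o Some) fY (@sig_eq _ _) (fun s t => fd _ _).
exists (phi (f None)) => y hy; apply: sig_eq => /=.
have phi_y : phi (f (Some (exist _ y hy))) = y by exact: ephi.
by rewrite -{1}phi_y phi_d fd.
Qed.

End RationalSpaces.
Arguments rum_cut_ext {Y d} H.

(** * A concrete Fraisse limit *)

Section UrysohnModel.
Local Open Scope ring_scope.

Definition posq := {q : rat | 0 < q}.
Definition wpt := {fsfun posq -> nat with 0%N}.

Definition wdist (f g : wpt) : rat :=
  \big[Num.max/0]_(q <- (finsupp f `|` finsupp g)%fset | f q != g q) sval q.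

Lemma wdist_ge0 f g : 0 <= wdist f g.
Proof. exact: bigmax_ge_id. Qed.

Lemma wdist_le f g t : 0 <= t -> wdist f g <= t <-> forall q : posq, t < sval q -> f q = g q.
Proof.
move=> t0; split=> [le q tq|agree]; last first.
  by apply: bigmax_le => // q fg; rewrite leNgt; apply/negP => /agree /eqP; apply/negP.
apply/eqP; apply: contraT => fg.
have qin : q \in (finsupp f `|` finsupp g)%fset.
  rewrite in_fsetU !mem_finsupp; apply: contraR fg.
  by rewrite negb_or !negbK => /andP [/eqP -> /eqP ->].
have qfg : sval q <= wdist f g by apply: le_bigmax_seq.
by have := le_trans qfg le; rewrite leNgt tq.
Qed.

Lemma wdist_agree f g q : wdist f g < sval q -> f q = g q.
Proof. exact: (wdist_le f g (wdist_ge0 f g)).1 (lexx _) q. Qed.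

Lemma wdist_rum : rum_axioms wdist.
Proof.
split=> [|f g|f g|f g h]; first exact: wdist_ge0.
- by rewrite /wdist fsetUC; apply: eq_bigl => q; rewrite eq_sym.
- split=> [e|<-]; last by apply/le_anti; rewrite wdist_ge0 andbT; apply/wdist_le.
  by apply/fsfunP => q; apply: wdist_agree; rewrite e; exact: proj2_sig q.
- have t0 : 0 <= Num.max (wdist f g) (wdist g h) by rewrite le_max wdist_ge0.
  apply/(wdist_le _ _ t0) => q; rewrite gt_max => /andP [fgq ghq].
  by rewrite (wdist_agree fgq) (wdist_agree ghq).
Qed.

Lemma wdist_with (f g : wpt) (rho : posq) v : v != g rho ->
  wdist [fsfun f with rho |-> v] g = Num.max (sval rho) (wdist f g).
Proof.
move=> vg; set z := [fsfun f with rho |-> v].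
have zE q : q != rho -> z q = f q by move=> ne; rewrite fsfun_withE (negbTE ne).
have rho_le : sval rho <= wdist z g.
  by rewrite leNgt; apply/negP => /wdist_agree; rewrite fsfun_with; apply/eqP.
apply/le_anti/andP; split.
- have t0 : 0 <= Num.max (sval rho) (wdist f g) by rewrite le_max wdist_ge0 orbT.
  apply/(wdist_le _ _ t0) => q; rewrite gt_max => /andP [rq fgq].
  by rewrite zE ?(wdist_agree fgq) //; apply: contraTneq rq => ->; rewrite ltxx.
- rewrite ge_max rho_le; apply/(wdist_le _ _ (wdist_ge0 _ _)) => q zgq.
  rewrite -zE ?(wdist_agree zgq) //.
  by apply: contraTneq zgq => ->; rewrite -leNgt.
Qed.

Definition W : tsu := tsu_of_rum wdist_rum.

Lemma W_countable : countable_tsu W.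
Proof. by split; apply: count_type_countType. Qed.

Lemma W_point_ext : point_ext W.
Proof.
move=> [|y0 ys] r [r0 radm]; first by exists [fsfun].
have [ym [ym_in ym_min]] : exists ym, List.In ym (y0 :: ys) /\
    forall y, List.In y (y0 :: ys) -> sval (r ym) <= sval (r y) by apply: list_argmin.
have rho0 : 0 < sval (r ym).
  rewrite lt_def (proj2_sig (r ym)) andbT; apply/eqP => e.
  by apply: (r0 _ ym_in); apply: sig_eq.
pose rho : posq := exist (fun q : rat => 0 < q) _ rho0.
pose v := (\max_(y <- y0 :: ys) (y : wpt) rho).+1.
have fresh y : List.In y (y0 :: ys) -> v != y rho.
  move=> hy; rewrite eq_sym neq_ltn ltnS; apply/orP; left.
  by apply: leq_bigmax_seq => //; apply/In_mem.
exists [fsfun ym with rho |-> v] => y hy; apply: sig_eq => /=.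
rewrite wdist_with ?fresh // (rum_sym wdist_rum ym).
have [rad1 rad2] := radm _ _ hy ym_in; have ry := ym_min _ hy.
apply/le_anti/andP; split.
- by rewrite ge_max ry /=; case: rad1 => // h; exact: le_trans h ry.
- by rewrite le_max; case: rad2 => ->; rewrite ?orbT.
Qed.

End UrysohnModel.

Lemma W_universal B : finite_tsu B -> dc_embeds B W.
Proof. exact: ext_universal (rum_cut_ext wdist_rum) W_point_ext B. Qed.

Lemma W_fraisse_limit : is_fraisse_limit W.
Proof. exact: ext_fraisse_limit W_countable (rum_cut_ext wdist_rum) W_point_ext. Qed.

Definition W_span (n : nat) : tsu :=
  let p := odflt ([::], [::]) (choice.unpickle n : option (seq wpt * seq qnn)) in span W p.1 p.2.

Lemma W_span_finite n : finite_tsu (W_span n).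
Proof. exact: span_finite. Qed.

Lemma W_span_enum A : finite_tsu A -> exists n, dc_isomorphic A (W_span n).
Proof.
move=> fA; have [f [g e]] := W_universal fA; case: fA => [[lA cA] [lD cD]].
exists (choice.pickle (List.map f lA, List.map g lD)); rewrite /W_span choice.pickleK /=.
exact: dc_iso_span_image.
Qed.

Lemma JEP_fin_holds : JEP_fin.
Proof.
move=> A B fA fB; have [f [g e]] := W_universal fA; have [f' [g' e']] := W_universal fB.
have [D [b1 [h1 [b2 [h2 [fD e1 e2 _ _]]]]]] := common_span fA fB e e'.
by exists D; split=> //; split; [exists b1, h1|exists b2, h2].
Qed.

Lemma AP_fin_holds : AP_fin.
Proof.
move=> A B C fA fB fC a1 g1 a2 g2 e1 e2.
have [c [hc ec]] := W_universal fC.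
have [b [hb [eb eba ebd]]] :=
  dc_emb_extend_along fA fB (rum_cut_ext wdist_rum) W_point_ext e1 (dc_emb_comp e2 ec).
have [D [b1 [h1 [b2 [h2 [fD e1' e2' hp hd]]]]]] := common_span fB fC eb ec.
exists D, b1, h1, b2, h2; split=> //; split=> //; split=> //.
by split=> [x|a]; [apply: hp; exact: eba|apply: hd; exact: ebd].
Qed.

Theorem theorem3p11 :
  (* U_fin is nonempty *)
  (exists A : tsu, finite_tsu A) /\
  (* only countably many dc-isomorphism types *)
  (exists s : nat -> tsu, (forall n, finite_tsu (s n)) /\
     forall A : tsu, finite_tsu A -> exists n, dc_isomorphic A (s n)) /\
  (* JEP and AP *)
  JEP_fin /\ AP_fin /\
  (* the Fraisse limit exists *)
  (exists U : tsu, is_fraisse_limit U) /\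
  (* it is dc-isomorphic to U_Q viewed as a two-sorted space over Q_{>=0} *)
  (forall U : tsu, is_fraisse_limit U ->
     forall (Y : Type) (d : Y -> Y -> rat) (H : rum_axioms d),
       is_UQ d -> dc_isomorphic U (tsu_of_rum H)) /\
  (* it is dc-homogeneous and iso-homogeneous *)
  (forall U : tsu, is_fraisse_limit U -> dc_homogeneous U /\ iso_homogeneous U).
Proof.
split; first by exists (W_span 0); apply: W_span_finite.
split; first by exists W_span; split; [exact: W_span_finite|exact: W_span_enum].
split; first exact: JEP_fin_holds.
split; first exact: AP_fin_holds.
split; first by exists W; exact: W_fraisse_limit.
split.
- move=> U [cU [_ [univ hom]]] Y d H hUQ.
  have cQ : countable_tsu (tsu_of_rum H) by split; [case: hUQ => _ []|apply: count_type_countType].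
  apply: ext_dc_isomorphic cU cQ _ (rum_cut_ext H) _ (UQ_point_ext hUQ).
  + exact: fraisse_cut_ext univ hom.
  + exact: fraisse_point_ext univ hom.
- move=> U [[cU _] [_ [univ hom]]]; split=> //.
  exact: ext_iso_homogeneous cU (fraisse_point_ext univ hom).
Qed.
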